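(* Let $n > 1$ and let $H_n$ denote the Boolean hypercube graph on vertex set $\{0,1\}^n$, in which two vertices are adjacent iff they differ in exactly one coordinate. Suppose $K \subseteq \{0,1\}^n$ satisfies $|K| > 2^{n-1}$, and suppose that for some $D > 0$ every $y \in K$ has degree at most $D$ in the induced subgraph $H_n[K]$ (the graph on vertex set $K$ whose edges are the edges of $H_n$ with both endpoints in $K$). Then $\mathrm{compl}(\mathcal{G}_{CS,n}) \leq D$.
   Context: Let $S_n$ be the set of permutations $\pi=(\pi(1),\dots,\pi(n))$ of $[n]=\{1,\dots,n\}$. A Bob-strategy is a family of functions $F_t : S_n \to \{0,1\}$, $t=1,\dots,n-1$, where each $F_t$ is $t$-restricted, i.e. $F_t(\pi)$ depends only on $\pi(1),\dots,\pi(t)$. For a fixed Bob-strategy, a permutation $\pi\in S_n$ and $z\in\{0,1\}$, define $b(\pi,z)\in\{0,1\}^n$ by $b_j = F_t(\pi)$ if $j=\pi(t)$ for some $t<n$, and $b_j = z$ if $j=\pi(n)$. For $b\in\{0,1\}^n$, the suspect set is $S(b) := \{ i \in [n] : \exists \rho\in S_n, u\in\{0,1\} \text{ with } \rho(n)=i \text{ and } b(\rho,u)=b\}$. The cost of the strategy on $(\pi,z)$ is $|S(b(\pi,z))|$; the complexity of the strategy is the maximum cost over all pairs $(\pi,z)\in S_n\times\{0,1\}$; and $\mathrm{compl}(\mathcal{G}_{CS,n})$ is the minimum complexity over all Bob-strategies for $n$. *)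

From mathcomp Require Import all_boot all_fingroup.
Set Implicit Arguments. Unset Strict Implicit. Unset Printing Implicit Defensive.

Local Open Scope group_scope.

(* Positions and elements of [n] are 0-indexed: 'I_n.  A permutation
   pi : {perm 'I_n} lists pi 0, ..., pi (n-1)  (= pi(1), ..., pi(n) in the paper). *)

(* A (candidate) Bob-strategy: G p is the paper's F_{p+1}, the bit assigned to
   the element at position p (0-indexed).  Only p < n-1 is used. *)
Definition strategy (n : nat) := {ffun 'I_n -> {ffun {perm 'I_n} -> bool}}.

Definition restrictedb n (G : strategy n) : bool :=
  [forall p : 'I_n, (p.+1 < n) ==>
     [forall pi : {perm 'I_n}, forall rho : {perm 'I_n},
        [forall s : 'I_n, (s <= p) ==> (pi s == rho s)] ==> (G p pi == G p rho)]].

Definition bvec n (G : strategy n) (pi : {perm 'I_n}) (z : bool) : {ffun 'I_n -> bool} :=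
  [ffun j => let p := (pi^-1) j in if p.+1 < n then G p pi else z].

Definition suspects n (G : strategy n) (b : {ffun 'I_n -> bool}) : {set 'I_n} :=
  [set i | [exists rho : {perm 'I_n}, exists u : bool,
     [exists t : 'I_n, (t.+1 == n) && (rho t == i)] && (bvec G rho u == b)]].

Definition cost n (G : strategy n) pi z := #|suspects G (bvec G pi z)|.

Definition complexity n (G : strategy n) : nat :=
  \max_(pi : {perm 'I_n}) \max_(z : bool) cost G pi z.

Definition has_strategy_of_complexity n (k : nat) : bool :=
  [exists G : strategy n, restrictedb G && (complexity G == k)].

Lemma exists_strategy n : exists k, has_strategy_of_complexity n k.
Proof.
pose G0 : strategy n := [ffun _ => [ffun _ => false]].
exists (complexity G0); apply/existsP; exists G0; rewrite eqxx andbT.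
apply/forallP => p; apply/implyP => _; apply/forallP => pi; apply/forallP => rho.
by apply/implyP => _; rewrite !ffunE.
Qed.

Definition compl (n : nat) : nat := ex_minn (@exists_strategy n).

Local Close Scope group_scope.
Definition hadj n (x y : {ffun 'I_n -> bool}) : bool := #|[set i | x i != y i]| == 1%N.

Definition ind_deg n (K : {set {ffun 'I_n -> bool}}) (y : {ffun 'I_n -> bool}) : nat :=
  #|[set x in K | hadj x y]|.

From mathcomp Require Import all_boot all_fingroup.
From mathcomp Require Import zify.
Set Implicit Arguments. Unset Strict Implicit. Unset Printing Implicit Defensive.

(* Bob answers greedily: when pi(t) is revealed he gives it the bit that keeps
   the larger half of the vectors of K consistent with all bits given so far.
   Since |K| > 2^(n-1), after the first n-1 answers at least two vectors of K
   remain; they can only differ at pi(n), so b(pi,0) and b(pi,1) both lie in K.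
   If i = rho(n) is a suspect for b = b(rho,u), then flipping b at i gives
   b(rho,~u), a neighbour of b in K; so the suspects of b inject into the
   neighbours of b in H_n[K], and every cost is at most D. *)

Definition ffun_upd n (a : {ffun 'I_n -> bool}) (j : 'I_n) (c : bool) :
  {ffun 'I_n -> bool} := [ffun i => if i == j then c else a i].

Definition flip n (b : {ffun 'I_n -> bool}) (i : 'I_n) := ffun_upd b i (~~ b i).

Lemma ffun_upd_same n (a : {ffun 'I_n -> bool}) j c : ffun_upd a j c j = c.
Proof. by rewrite ffunE eqxx. Qed.

Lemma ffun_upd_other n (a : {ffun 'I_n -> bool}) j c i :
  i != j -> ffun_upd a j c i = a i.
Proof. by rewrite ffunE => /negbTE ->. Qed.

Lemma flip_inj n (b : {ffun 'I_n -> bool}) : injective (flip b).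
Proof.
move=> i j /ffunP /(_ i); rewrite ffun_upd_same.
by case: (eqVneq i j) => // /ffun_upd_other ->; case: (b i).
Qed.

Lemma hadj_flip n (b : {ffun 'I_n -> bool}) i : hadj (flip b i) b.
Proof.
rewrite /hadj (_ : [set j | flip b i j != b j] = [set i]) ?cards1 //.
apply/setP => j; rewrite !inE; case: (eqVneq j i) => [->|ji].
  by rewrite ffun_upd_same; case: (b i).
by rewrite ffun_upd_other ?eqxx.
Qed.

Section Greedy.

Variables (n : nat) (K : {set {ffun 'I_n -> bool}}).
Implicit Types (s t : seq 'I_n) (a x : {ffun 'I_n -> bool}).

Definition consistent s a := [set x in K | all (fun i => x i == a i) s].

(* [s] lists the coordinates fixed so far, the most recent one first. *)
Fixpoint greedy s : {ffun 'I_n -> bool} :=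
  if s is j :: s' then
    let a := greedy s' in
    ffun_upd a j (#|consistent (j :: s') (ffun_upd a j false)|
                    < #|consistent (j :: s') (ffun_upd a j true)|)
  else [ffun _ => false].

Lemma consistent_agrees s a x i : x \in consistent s a -> i \in s -> x i = a i.
Proof. by rewrite inE => /andP[_ /allP agr] /agr /eqP. Qed.

Lemma consistent_cons s a j c : j \notin s ->
  consistent (j :: s) (ffun_upd a j c)
  = consistent s a :&: [set x : {ffun 'I_n -> bool} | x j == c].
Proof.
move=> js; apply/setP => x; rewrite !inE /= ffun_upd_same.
have -> : all (fun i => x i == ffun_upd a j c i) s = all (fun i => x i == a i) s.
  by apply: eq_in_all => i i_s; rewrite ffun_upd_other //; apply: contraNneq js => <-.
by case: (x \in K); case: (x j == c); case: all.
Qed.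

Lemma card_consistent_split s a j : j \notin s ->
  #|consistent s a| = #|consistent (j :: s) (ffun_upd a j true)|
                      + #|consistent (j :: s) (ffun_upd a j false)|.
Proof.
move=> js; rewrite !consistent_cons //.
rewrite -(cardsID [set x : {ffun 'I_n -> bool} | x j] (consistent s a)).
by congr (_ + _); apply: eq_card => x; rewrite !inE; case: (x j); rewrite ?andbT ?andbF.
Qed.

Lemma card_consistent_greedy s : uniq s ->
  #|K| <= 2 ^ size s * #|consistent s (greedy s)|.
Proof.
elim: s => [_|j s IH /andP[js us]].
  by rewrite mul1n; apply/subset_leq_card/subsetP => x xK; rewrite inE xK.
apply: leq_trans (IH us) _; rewrite expnSr -mulnA leq_mul //=.
rewrite (card_consistent_split _ js) mul2n -addnn; case: ltnP => [/ltnW|] le_tf.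
  by rewrite leq_add2l.
by rewrite leq_add2r.
Qed.

Lemma greedy_cat_notin t s i : i \notin t -> greedy (t ++ s) i = greedy s i.
Proof.
elim: t => // j t IH; rewrite inE negb_or => /andP[ij it] /=.
by rewrite ffun_upd_other ?IH.
Qed.

End Greedy.

Section Strategies.

Variable n : nat.
Implicit Types (G : strategy n) (pi : {perm 'I_n}) (b : {ffun 'I_n -> bool}).

Lemma bvec_last G pi u (t : 'I_n) : t.+1 = n -> bvec G pi u (pi t) = u.
Proof. by move=> tn; rewrite ffunE permK /= tn ltnn. Qed.

Lemma bvec_negb_last G pi u (t : 'I_n) : t.+1 = n ->
  bvec G pi (~~ u) = ffun_upd (bvec G pi u) (pi t) (~~ u).
Proof.
move=> tn; apply/ffunP => j; case: (eqVneq j (pi t)) => [->|jt].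
  by rewrite ffun_upd_same bvec_last.
have /eqP jt' : ((pi^-1)%g j : nat) != t.
  by apply: contraNneq jt => /val_inj <-; rewrite permKV.
have jn : ((pi^-1)%g j).+1 < n by move: (ltn_ord ((pi^-1)%g j)); lia.
by rewrite ffun_upd_other // !ffunE /= jn.
Qed.

Lemma flip_suspect G b i :
  i \in suspects G b -> exists rho u, flip b i = bvec G rho u.
Proof.
rewrite inE => /existsP[rho /existsP[u /andP[/existsP[t /andP[/eqP tn /eqP <-]]]]].
move=> /eqP <-; exists rho, (~~ u).
by rewrite (bvec_negb_last _ _ _ tn) /flip bvec_last.
Qed.

Lemma cost_le_ind_deg G (K : {set {ffun 'I_n -> bool}}) pi z :
  (forall rho u, bvec G rho u \in K) -> cost G pi z <= ind_deg K (bvec G pi z).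
Proof.
move=> inK; set b := bvec G pi z.
rewrite /cost -/b -(card_imset _ (@flip_inj n b)).
apply/subset_leq_card/subsetP => x /imsetP[i /flip_suspect[rho [u bi]] ->].
by rewrite inE hadj_flip bi inK.
Qed.

Lemma complexity_le G D : (forall pi z, cost G pi z <= D) -> complexity G <= D.
Proof. by move=> le_cost; do 2!apply/bigmax_leqP => ? _. Qed.

Lemma compl_le_complexity G : restrictedb G -> compl n <= complexity G.
Proof.
move=> rG; rewrite /compl; case: ex_minnP => m _; apply.
by apply/existsP; exists G; rewrite rG eqxx.
Qed.

End Strategies.

Section GreedyStrategy.

Variables (n : nat) (K : {set {ffun 'I_n -> bool}}).
Implicit Types (pi : {perm 'I_n}).

Definition reveal_order pi : seq 'I_n := [seq pi i | i <- enum 'I_n].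

Lemma index_reveal_order pi j : index j (reveal_order pi) = (pi^-1)%g j.
Proof. by rewrite -{1}(permKV pi j) index_map ?index_enum_ord //; apply: perm_inj. Qed.

Lemma mem_reveal_order pi j : j \in reveal_order pi.
Proof. by rewrite -(permKV pi j) map_f ?mem_enum. Qed.

Lemma mem_take_reveal_order pi j k :
  (j \in take k (reveal_order pi)) = ((pi^-1)%g j < k).
Proof. by rewrite in_take ?index_reveal_order ?mem_reveal_order. Qed.

Lemma uniq_reveal_order pi : uniq (reveal_order pi).
Proof. by rewrite map_inj_uniq ?enum_uniq //; apply: perm_inj. Qed.

Lemma take_reveal_order (pi rho : {perm 'I_n}) k :
  (forall i : 'I_n, i < k -> pi i = rho i) ->
  take k (reveal_order pi) = take k (reveal_order rho).
Proof.
move=> same; rewrite /reveal_order -[take k [seq pi i | i <- _]]map_take.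
rewrite -[take k [seq rho i | i <- _]]map_take; apply/eq_in_map => i.
by rewrite in_take ?mem_enum // index_enum_ord => /same.
Qed.

Definition greedy_strategy : strategy n :=
  [ffun p : 'I_n => [ffun pi : {perm 'I_n} =>
     greedy K (rev (take p.+1 (reveal_order pi))) (pi p)]].

Lemma greedy_strategy_restricted : restrictedb greedy_strategy.
Proof.
apply/forallP => p; apply/implyP => _; apply/forallP => pi; apply/forallP => rho.
apply/implyP => /forallP same; rewrite !ffunE (eqP (implyP (same p) (leqnn p))).
rewrite (@take_reveal_order pi rho) // => i; rewrite ltnS => ip.
exact/eqP/(implyP (same i)).
Qed.

Lemma bvec_greedy_strategy pi z j : ((pi^-1)%g j).+1 < n ->
  bvec greedy_strategy pi z j = greedy K (rev (take n.-1 (reveal_order pi))) j.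
Proof.
set k := (pi^-1)%g j => kn; rewrite ffunE /= kn !ffunE permKV.
have -> : n.-1 = k.+1 + (n.-1 - k.+1) by lia.
have nodup : j \notin drop k.+1 (reveal_order pi).
  have := drop_uniq k (uniq_reveal_order pi).
  rewrite -{1}(index_reveal_order pi j) drop_index ?mem_reveal_order //.
  by rewrite index_reveal_order => /andP[].
rewrite takeD rev_cat greedy_cat_notin // mem_rev; apply: contra nodup; exact: mem_take.
Qed.

Lemma consistent_greedy_bvec pi (t : 'I_n) x : t.+1 = n ->
  x \in consistent K (rev (take n.-1 (reveal_order pi)))
                     (greedy K (rev (take n.-1 (reveal_order pi)))) ->
  x = bvec greedy_strategy pi (x (pi t)).
Proof.
move=> tn xc; apply/ffunP => j; case: (ltnP ((pi^-1)%g j).+1 n) => jn.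
  rewrite bvec_greedy_strategy // (consistent_agrees xc) //.
  by rewrite mem_rev mem_take_reveal_order; lia.
have -> : j = pi t.
  rewrite -[j](permKV pi); congr (pi _); apply: val_inj => /=.
  by move: (ltn_ord ((pi^-1)%g j)); lia.
by rewrite bvec_last.
Qed.

Lemma bvec_greedy_strategy_in pi z :
  0 < n -> 2 ^ n.-1 < #|K| -> bvec greedy_strategy pi z \in K.
Proof.
move=> n0 hK; have ln : n.-1 < n by rewrite prednK.
have tn : (Ordinal ln).+1 = n by rewrite /= prednK.
set s := rev (take n.-1 (reveal_order pi)); set a := greedy K s.
have size_s : size s = n.-1.
  by rewrite size_rev size_takel // size_map size_enum_ord leq_pred.
have uniq_s : uniq s by rewrite rev_uniq take_uniq // uniq_reveal_order.
have two : 1 < #|consistent K s a|.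
  have := leq_trans hK (card_consistent_greedy K uniq_s).
  by rewrite size_s -{1}[2 ^ _]muln1 ltn_mul2l => /andP[].
apply/negPn/negP => zK.
have : consistent K s a \subset [set bvec greedy_strategy pi (~~ z)].
  apply/subsetP => x xc; have xK : x \in K by move: xc; rewrite inE => /andP[].
  move: xK; rewrite inE (consistent_greedy_bvec tn xc); move: (x _) => c.
  by case: c z zK => -[] //= /negP.
by move/subset_leq_card; rewrite cards1; lia.
Qed.

End GreedyStrategy.

Theorem theorem1 (n : nat) (K : {set {ffun 'I_n -> bool}}) (D : nat) :
  1 < n -> 2 ^ (n - 1) < #|K| -> 0 < D ->
  (forall y, y \in K -> ind_deg K y <= D) ->
  compl n <= D.
Proof.
move=> n1 hK _ degK; rewrite subn1 in hK.
have inK pi z : bvec (greedy_strategy K) pi z \in K.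
  by apply: bvec_greedy_strategy_in; rewrite // ltnW.
apply: leq_trans (compl_le_complexity (greedy_strategy_restricted K)) _.
apply: complexity_le => pi z.
exact: leq_trans (cost_le_ind_deg pi z inK) (degK _ (inK pi z)).
Qed.
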